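(* Let $K\ge 2$, let $\pi_1,\dots,\pi_K>0$ with $\sum_k\pi_k=1$, and let $\mu_1,\dots,\mu_K$ be pairwise distinct reals. For $\epsilon\in[0,1-\max_k\pi_k]$ let $f(\epsilon)$ be the supremum of $$\sum_{k'=1}^K\tilde\pi_{k'}\tilde\mu_{k'}^2$$ over all matrices $(\pi_{kk'})_{k,k'=1}^K$ with $\pi_{kk'}\ge 0$, $\sum_{k'}\pi_{kk'}=\pi_k$ for all $k$, and $1-\sum_{k'}\max_k\pi_{kk'}\ge\epsilon$, where $\tilde\pi_{k'}=\sum_k\pi_{kk'}$, $\tilde\mu_{k'}=\sum_k\pi_{kk'}\mu_k/\tilde\pi_{k'}$, and terms with $\tilde\pi_{k'}=0$ are taken to be $0$. Then $f$ is non-increasing on $[0,1-\max_k\pi_k]$, $f(0)=\sum_k\pi_k\mu_k^2$, and $f(\epsilon)<f(0)$ for every $\epsilon\in(0,1-\max_k\pi_k]$.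
   Context: Here $\pi_{kk'}$ plays the role of the proportion of samples lying both in the $k$-th true cluster and the $k'$-th estimated cluster, and $1-\sum_{k'}\max_k\pi_{kk'}$ is the corresponding error clustering rate. *)

From Stdlib Require Import Reals Lra ClassicalEpsilon.
Open Scope R_scope.

Fixpoint rsum (n : nat) (f : nat -> R) : R :=
  match n with O => 0 | S m => rsum m f + f m end.

(* rmax n f = max(0, f 0, ..., f (n-1)); used only on nonnegative families *)
Fixpoint rmax (n : nat) (f : nat -> R) : R :=
  match n with O => 0 | S m => Rmax (rmax m f) (f m) end.

Definition Rsup (E : R -> Prop) : R :=
  epsilon (inhabits 0) (fun l => is_lub E l).

(* feasible joint matrices (pi_{kk'}), indices k,k' in {0..K-1} *)
Definition feasible (K : nat) (pi : nat -> R) (eps : R) (P : nat -> nat -> R) : Prop :=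
  (forall k k', (k < K)%nat -> (k' < K)%nat -> 0 <= P k k') /\
  (forall k, (k < K)%nat -> rsum K (fun k' => P k k') = pi k) /\
  1 - rsum K (fun k' => rmax K (fun k => P k k')) >= eps.

Definition pit (K : nat) (P : nat -> nat -> R) (k' : nat) : R :=
  rsum K (fun k => P k k').

Definition mut (K : nat) (mu : nat -> R) (P : nat -> nat -> R) (k' : nat) : R :=
  rsum K (fun k => P k k' * mu k) / pit K P k'.

Definition objective (K : nat) (mu : nat -> R) (P : nat -> nat -> R) : R :=
  rsum K (fun k' => if Req_EM_T (pit K P k') 0 then 0
                    else pit K P k' * (mut K mu P k') ^ 2).

Definition fval (K : nat) (pi mu : nat -> R) (eps : R) : R :=
  Rsup (fun v => exists P, feasible K pi eps P /\ v = objective K mu P).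

(** The objective is the between-cluster part of the total second moment
    [sum_k pi_k mu_k^2]: column [k'] loses exactly its weighted variance
    [sum_k pi_kk' (mu_k - mu~_k')^2].  If [d] is the smallest gap between the
    [mu_k], at most one [mu_k] lies within [d/2] of any point, so that variance
    is at least [d^2/4 (pi~_k' - max_k pi_kk')].  Summing over the columns,
    every matrix of error rate at least [e] has objective at most
    [sum_k pi_k mu_k^2 - d^2/4 e].  The diagonal matrix attains the second
    moment at [e = 0], and the matrix with identical columns [pi_k / K] is
    feasible for every admissible [e], so all suprema exist. *)

From Stdlib Require Import Reals Lra Lia ClassicalEpsilon Classical.
Open Scope R_scope.

Lemma rsum_ext n f g : (forall k, (k < n)%nat -> f k = g k) -> rsum n f = rsum n g.
Proof.
  induction n as [|n IH]; intros H; simpl; [reflexivity|].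
  rewrite IH by (intros; apply H; lia).
  rewrite H by lia; reflexivity.
Qed.

Lemma rsum_le n f g : (forall k, (k < n)%nat -> f k <= g k) -> rsum n f <= rsum n g.
Proof.
  induction n as [|n IH]; intros H; simpl; [lra|].
  assert (rsum n f <= rsum n g) by (apply IH; intros; apply H; lia).
  assert (f n <= g n) by (apply H; lia).
  lra.
Qed.

Lemma rsum_plus n f g : rsum n (fun k => f k + g k) = rsum n f + rsum n g.
Proof. induction n; simpl; lra. Qed.

Lemma rsum_scal_l n a f : rsum n (fun k => a * f k) = a * rsum n f.
Proof. induction n as [|n IH]; simpl; [|rewrite IH]; ring. Qed.

Lemma rsum_scal_r n a f : rsum n (fun k => f k * a) = rsum n f * a.
Proof. induction n as [|n IH]; simpl; [|rewrite IH]; ring. Qed.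

Lemma rsum_const n a : rsum n (fun _ => a) = INR n * a.
Proof. induction n as [|n IH]; simpl rsum; [simpl; ring|rewrite IH, S_INR; ring]. Qed.

Lemma rsum_swap n m f :
  rsum n (fun i => rsum m (fun j => f i j)) = rsum m (fun j => rsum n (fun i => f i j)).
Proof.
  induction n as [|n IH]; simpl.
  - rewrite rsum_const; simpl; ring.
  - rewrite IH, <- rsum_plus; reflexivity.
Qed.

Lemma rsum_indicator n j a :
  (j < n)%nat -> rsum n (fun k => if Nat.eq_dec k j then a else 0) = a.
Proof.
  induction n as [|n IH]; intros Hj; [lia|simpl].
  destruct (Nat.eq_dec n j) as [->|Hne].
  - rewrite (rsum_ext _ _ (fun _ => 0)), rsum_const; [ring|].
    intros k Hk; destruct (Nat.eq_dec k j); [lia|reflexivity].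
  - rewrite IH by lia; ring.
Qed.

Lemma rsum_nonneg n f : (forall k, (k < n)%nat -> 0 <= f k) -> 0 <= rsum n f.
Proof.
  intros H; apply Rle_trans with (rsum n (fun _ => 0)).
  - rewrite rsum_const; lra.
  - apply rsum_le; exact H.
Qed.

Lemma rsum_ge_term n f k :
  (forall i, (i < n)%nat -> 0 <= f i) -> (k < n)%nat -> f k <= rsum n f.
Proof.
  induction n as [|n IH]; intros H Hk; [lia|simpl].
  destruct (Nat.eq_dec k n) as [->|Hne].
  - assert (0 <= rsum n f) by (apply rsum_nonneg; intros; apply H; lia); lra.
  - assert (f k <= rsum n f) by (apply IH; [intros; apply H|]; lia).
    assert (0 <= f n) by (apply H; lia); lra.
Qed.

Lemma rmax_ge0 n f : 0 <= rmax n f.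
Proof. induction n; simpl; [lra|eapply Rle_trans; [eassumption|apply Rmax_l]]. Qed.

Lemma rmax_ub n f k : (k < n)%nat -> f k <= rmax n f.
Proof.
  induction n as [|n IH]; intros Hk; [lia|simpl].
  destruct (Nat.eq_dec k n) as [->|Hne]; [apply Rmax_r|].
  eapply Rle_trans; [apply IH; lia|apply Rmax_l].
Qed.

Lemma rmax_lub n f b : 0 <= b -> (forall k, (k < n)%nat -> f k <= b) -> rmax n f <= b.
Proof.
  induction n as [|n IH]; intros Hb H; simpl; [lra|].
  apply Rmax_lub; [apply IH; auto|]; intros; apply H; lia.
Qed.

Fixpoint rmin1 (n : nat) (h : nat -> R) : R :=
  match n with O => 1 | S m => Rmin (rmin1 m h) (h m) end.

Lemma rmin1_pos n h : (forall k, (k < n)%nat -> 0 < h k) -> 0 < rmin1 n h.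
Proof.
  induction n as [|n IH]; intros H; simpl; [lra|].
  apply Rmin_pos; [apply IH; intros|]; apply H; lia.
Qed.

Lemma rmin1_le n h k : (k < n)%nat -> rmin1 n h <= h k.
Proof.
  induction n as [|n IH]; intros Hk; [lia|simpl].
  destruct (Nat.eq_dec k n) as [->|Hne]; [apply Rmin_r|].
  eapply Rle_trans; [apply Rmin_l|apply IH; lia].
Qed.

Lemma min_gap_pos K (mu : nat -> R) :
  (forall k l, (k < K)%nat -> (l < K)%nat -> k <> l -> mu k <> mu l) ->
  exists d, 0 < d /\
    forall k l, (k < K)%nat -> (l < K)%nat -> k <> l -> d <= Rabs (mu k - mu l).
Proof.
  intros Hdist.
  set (gap k := rmin1 K (fun l => if Nat.eq_dec k l then 1 else Rabs (mu k - mu l))).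
  exists (rmin1 K gap); split.
  - apply rmin1_pos; intros k Hk; apply rmin1_pos; intros l Hl.
    destruct (Nat.eq_dec k l) as [|Hkl]; [lra|].
    apply Rabs_pos_lt; intro E; apply (Hdist k l Hk Hl Hkl); lra.
  - intros k l Hk Hl Hkl.
    eapply Rle_trans; [apply (rmin1_le _ _ k Hk)|].
    eapply Rle_trans; [apply (rmin1_le _ _ l Hl)|].
    destruct (Nat.eq_dec k l); [contradiction|lra].
Qed.

Lemma weighted_sq_dev n (p mu : nat -> R) m :
  rsum n (fun k => p k * (mu k - m) ^ 2)
  = rsum n (fun k => p k * mu k ^ 2) - 2 * m * rsum n (fun k => p k * mu k)
    + m ^ 2 * rsum n p.
Proof.
  transitivity (rsum n (fun k => p k * mu k ^ 2 + (-2 * m) * (p k * mu k) + m ^ 2 * p k)).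
  - apply rsum_ext; intros; ring.
  - rewrite !rsum_plus, !rsum_scal_l; ring.
Qed.

(** Two points at distance [>= d] cannot both lie within [d/2] of [m], so all
    weights except at most one are charged at least [d^2/4]. *)
Lemma separated_weighted_sq_dev_ge n (p mu : nat -> R) d m :
  0 <= d ->
  (forall k, (k < n)%nat -> 0 <= p k) ->
  (forall k l, (k < n)%nat -> (l < n)%nat -> k <> l -> d <= Rabs (mu k - mu l)) ->
  d ^ 2 / 4 * (rsum n p - rmax n p) <= rsum n (fun k => p k * (mu k - m) ^ 2).
Proof.
  intros Hd Hp Hgap.
  assert (Hc : 0 <= d ^ 2 / 4) by (pose proof (pow2_ge_0 d); lra).
  assert (far : forall k, (k < n)%nat -> d / 2 <= Rabs (mu k - m) ->
                  d ^ 2 / 4 * p k <= p k * (mu k - m) ^ 2).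
  { intros k Hk Hkm; rewrite <- (pow2_abs (mu k - m)).
    assert (d ^ 2 / 4 <= Rabs (mu k - m) ^ 2) by nra.
    pose proof (Hp k Hk); nra. }
  destruct (classic (exists j, (j < n)%nat /\ Rabs (mu j - m) < d / 2))
    as [[j [Hj Hjm]]|Hnone].
  - apply Rle_trans with
      (rsum n (fun k => d ^ 2 / 4 * p k + -1 * (d ^ 2 / 4) * (if Nat.eq_dec k j then p j else 0))).
    + rewrite rsum_plus, !rsum_scal_l, rsum_indicator by exact Hj.
      assert (p j <= rmax n p) by (apply rmax_ub; exact Hj); nra.
    + apply rsum_le; intros k Hk; destruct (Nat.eq_dec k j) as [->|Hkj].
      * pose proof (Hp j Hk); pose proof (pow2_ge_0 (mu j - m)); nra.
      * assert (d / 2 <= Rabs (mu k - m)).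
        { pose proof (Rabs_triang (mu k - m) (m - mu j)) as T.
          replace (mu k - m + (m - mu j)) with (mu k - mu j) in T by ring.
          rewrite Rabs_minus_sym in Hjm; pose proof (Hgap k j Hk Hj Hkj); lra. }
        pose proof (far k Hk ltac:(assumption)); lra.
  - apply Rle_trans with (rsum n (fun k => d ^ 2 / 4 * p k)).
    + rewrite rsum_scal_l; pose proof (rmax_ge0 n p); nra.
    + apply rsum_le; intros k Hk; apply far; [exact Hk|].
      apply Rnot_lt_le; intro Hlt; apply Hnone; exists k; auto.
Qed.

Lemma column_term_le n (p mu : nat -> R) d :
  0 <= d ->
  (forall k, (k < n)%nat -> 0 <= p k) ->
  (forall k l, (k < n)%nat -> (l < n)%nat -> k <> l -> d <= Rabs (mu k - mu l)) ->
  (if Req_EM_T (rsum n p) 0 then 0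
   else rsum n p * (rsum n (fun k => p k * mu k) / rsum n p) ^ 2)
  <= rsum n (fun k => p k * mu k ^ 2) - d ^ 2 / 4 * (rsum n p - rmax n p).
Proof.
  intros Hd Hp Hgap.
  assert (Hc : 0 <= d ^ 2 / 4) by (pose proof (pow2_ge_0 d); lra).
  destruct (Req_EM_T (rsum n p) 0) as [E|E].
  - rewrite E.
    assert (0 <= rsum n (fun k => p k * mu k ^ 2)).
    { apply rsum_nonneg; intros k Hk; apply Rmult_le_pos; [auto|apply pow2_ge_0]. }
    pose proof (rmax_ge0 n p); nra.
  - pose proof (separated_weighted_sq_dev_ge n p mu d
                  (rsum n (fun k => p k * mu k) / rsum n p) Hd Hp Hgap) as Hspread.
    rewrite weighted_sq_dev in Hspread.
    replace (rsum n p * (rsum n (fun k => p k * mu k) / rsum n p) ^ 2)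
      with (2 * (rsum n (fun k => p k * mu k) / rsum n p) * rsum n (fun k => p k * mu k)
            - (rsum n (fun k => p k * mu k) / rsum n p) ^ 2 * rsum n p)
      by (field; exact E).
    lra.
Qed.

Definition feasible_values (K : nat) (pi mu : nat -> R) (e : R) (v : R) : Prop :=
  exists P, feasible K pi e P /\ v = objective K mu P.

Lemma Rsup_is_lub E : bound E -> (exists x, E x) -> is_lub E (Rsup E).
Proof.
  intros Hb Hne; unfold Rsup; apply epsilon_spec.
  destruct (completeness E Hb Hne) as [m Hm]; exists m; exact Hm.
Qed.

Lemma feasible_antitone K pi e1 e2 P :
  e1 <= e2 -> feasible K pi e2 P -> feasible K pi e1 P.
Proof. intros He (Hnn & Hrow & Herr); repeat split; auto; lra. Qed.

Lemma rsum_columns K (pi g : nat -> R) (P : nat -> nat -> R) :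
  (forall k, (k < K)%nat -> rsum K (fun k' => P k k') = pi k) ->
  rsum K (fun k' => rsum K (fun k => P k k' * g k)) = rsum K (fun k => pi k * g k).
Proof.
  intros Hrow; rewrite <- (rsum_swap K K (fun k k' => P k k' * g k)).
  apply rsum_ext; intros k Hk; rewrite rsum_scal_r, Hrow by exact Hk; reflexivity.
Qed.

Lemma objective_le K pi mu d e P :
  0 <= d ->
  (forall k l, (k < K)%nat -> (l < K)%nat -> k <> l -> d <= Rabs (mu k - mu l)) ->
  rsum K pi = 1 -> feasible K pi e P ->
  objective K mu P <= rsum K (fun k => pi k * mu k ^ 2) - d ^ 2 / 4 * e.
Proof.
  intros Hd Hgap Hsum (Hnn & Hrow & Herr).
  assert (Hmass : rsum K (fun k' => pit K P k') = 1).
  { rewrite <- Hsum, (rsum_ext K pi (fun k => pi k * 1)) by (intros; ring).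
    rewrite <- (rsum_columns K pi (fun _ => 1) P Hrow).
    apply rsum_ext; intros k' _; unfold pit; apply rsum_ext; intros; ring. }
  unfold objective, mut.
  eapply Rle_trans.
  { apply rsum_le; intros k' Hk'; unfold pit.
    apply (column_term_le K (fun k => P k k') mu d); auto. }
  cbv beta.
  rewrite (rsum_ext K _ (fun k' => rsum K (fun k => P k k' * mu k ^ 2)
                                + (- (d ^ 2 / 4)) * (pit K P k' - rmax K (fun k => P k k'))))
    by (intros; unfold pit; ring).
  rewrite rsum_plus, rsum_scal_l, (rsum_columns K pi _ P Hrow).
  replace (rsum K (fun k' => pit K P k' - rmax K (fun k => P k k')))
    with (1 - rsum K (fun k' => rmax K (fun k => P k k'))).
  - pose proof (pow2_ge_0 d); nra.
  - rewrite (rsum_ext K (fun k' => pit K P k' - rmax K (fun k => P k k'))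
                       (fun k' => pit K P k' + -1 * rmax K (fun k => P k k')))
      by (intros; ring).
    rewrite rsum_plus, rsum_scal_l; unfold pit in *; lra.
Qed.

Definition diag_matrix (pi : nat -> R) (k k' : nat) : R :=
  if Nat.eq_dec k k' then pi k else 0.

(** Every entry of row [k] is at most [pi_k / K <= max pi], so the column
    maxima add up to at most [max pi]. *)
Definition uniform_matrix (K : nat) (pi : nat -> R) (k k' : nat) : R := pi k / INR K.

Section Witnesses.

Variables (K : nat) (pi mu : nat -> R).
Hypothesis Hpos : forall k, (k < K)%nat -> 0 < pi k.
Hypothesis Hsum : rsum K pi = 1.

Lemma diag_matrix_col k' : (k' < K)%nat -> pit K (diag_matrix pi) k' = pi k'.
Proof.
  intros Hk'; unfold pit, diag_matrix; rewrite <- (rsum_indicator K k' (pi k')) by exact Hk'.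
  apply rsum_ext; intros k _; destruct (Nat.eq_dec k k') as [->|]; reflexivity.
Qed.

Lemma diag_matrix_feasible : feasible K pi 0 (diag_matrix pi).
Proof.
  unfold feasible; repeat split.
  - intros k k' Hk _; unfold diag_matrix.
    destruct (Nat.eq_dec k k'); [apply Rlt_le, Hpos, Hk|lra].
  - intros k Hk; unfold diag_matrix.
    transitivity (rsum K (fun k' => if Nat.eq_dec k' k then pi k else 0));
      [|apply rsum_indicator; exact Hk].
    apply rsum_ext; intros k' _.
    destruct (Nat.eq_dec k k'), (Nat.eq_dec k' k); subst; congruence.
  - assert (rsum K (fun k' => rmax K (fun k => diag_matrix pi k k')) <= rsum K pi); [|lra].
    apply rsum_le; intros k' Hk'; rewrite <- (diag_matrix_col k' Hk').
    apply rmax_lub; [rewrite diag_matrix_col by exact Hk'; apply Rlt_le, Hpos, Hk'|].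
    intros k Hk; apply (rsum_ge_term K (fun i => diag_matrix pi i k')); [|exact Hk].
    intros i Hi; unfold diag_matrix; destruct (Nat.eq_dec i k'); [apply Rlt_le, Hpos, Hi|lra].
Qed.

Lemma diag_matrix_objective :
  objective K mu (diag_matrix pi) = rsum K (fun k => pi k * mu k ^ 2).
Proof.
  unfold objective, mut; apply rsum_ext; intros k' Hk'.
  rewrite diag_matrix_col by exact Hk'.
  rewrite (rsum_ext K _ (fun k => if Nat.eq_dec k k' then pi k' * mu k' else 0))
    by (intros k _; unfold diag_matrix; destruct (Nat.eq_dec k k') as [->|]; ring).
  rewrite rsum_indicator by exact Hk'.
  pose proof (Hpos k' Hk').
  destruct (Req_EM_T (pi k') 0); [lra|field; lra].
Qed.

Lemma uniform_matrix_feasible e :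
  (0 < K)%nat -> e <= 1 - rmax K pi -> feasible K pi e (uniform_matrix K pi).
Proof.
  intros HK He; assert (HKr : 0 < INR K) by (apply lt_0_INR; exact HK).
  unfold feasible, uniform_matrix; repeat split.
  - intros k k' Hk _; apply Rlt_le, Rdiv_lt_0_compat; auto.
  - intros k _; rewrite rsum_const; field; lra.
  - assert (rsum K (fun k' => rmax K (fun k => pi k / INR K)) <= rmax K pi); [|lra].
    replace (rmax K pi) with (rsum K (fun _ => rmax K pi / INR K))
      by (rewrite rsum_const; field; lra).
    apply rsum_le; intros k' _; apply rmax_lub.
    + apply Rmult_le_pos; [apply rmax_ge0|apply Rlt_le, Rinv_0_lt_compat, HKr].
    + intros k Hk; apply Rmult_le_compat_r; [apply Rlt_le, Rinv_0_lt_compat, HKr|].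
      apply rmax_ub; exact Hk.
Qed.

Lemma rmax_le_1 : rmax K pi <= 1.
Proof.
  apply rmax_lub; [lra|]; intros k Hk; rewrite <- Hsum.
  apply rsum_ge_term; [intros; apply Rlt_le, Hpos|]; assumption.
Qed.

End Witnesses.

Section Suprema.

Variables (K : nat) (pi mu : nat -> R) (d : R).
Hypothesis HK : (0 < K)%nat.
Hypothesis Hpos : forall k, (k < K)%nat -> 0 < pi k.
Hypothesis Hsum : rsum K pi = 1.
Hypothesis Hd : 0 <= d.
Hypothesis Hgap :
  forall k l, (k < K)%nat -> (l < K)%nat -> k <> l -> d <= Rabs (mu k - mu l).

Lemma fval_is_lub e :
  e <= 1 - rmax K pi -> is_lub (feasible_values K pi mu e) (fval K pi mu e).
Proof.
  intros He; apply Rsup_is_lub.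
  - exists (rsum K (fun k => pi k * mu k ^ 2) - d ^ 2 / 4 * e).
    intros v (P & HP & ->); apply (objective_le K pi); assumption.
  - exists (objective K mu (uniform_matrix K pi)), (uniform_matrix K pi).
    split; [apply uniform_matrix_feasible|]; auto.
Qed.

Lemma fval_le e :
  e <= 1 - rmax K pi -> fval K pi mu e <= rsum K (fun k => pi k * mu k ^ 2) - d ^ 2 / 4 * e.
Proof.
  intros He; apply (fval_is_lub e He).
  intros v (P & HP & ->); apply (objective_le K pi); assumption.
Qed.

Lemma fval_antitone e1 e2 :
  e1 <= e2 -> e2 <= 1 - rmax K pi -> fval K pi mu e2 <= fval K pi mu e1.
Proof.
  intros H12 H2; apply (fval_is_lub e2 H2).
  intros v (P & HP & ->); apply (fval_is_lub e1 ltac:(lra)).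
  exists P; split; [apply (feasible_antitone K pi e1 e2)|]; auto.
Qed.

Lemma fval_0 : fval K pi mu 0 = rsum K (fun k => pi k * mu k ^ 2).
Proof.
  assert (H0 : 0 <= 1 - rmax K pi) by (pose proof (rmax_le_1 K pi Hpos Hsum); lra).
  apply Rle_antisym.
  - pose proof (fval_le 0 H0); lra.
  - rewrite <- (diag_matrix_objective K pi mu Hpos).
    apply (fval_is_lub 0 H0); exists (diag_matrix pi); split; [|reflexivity].
    apply diag_matrix_feasible; assumption.
Qed.

End Suprema.

Theorem lemma4 (K : nat) (pi mu : nat -> R)
  (HK : (2 <= K)%nat)
  (Hpos : forall k, (k < K)%nat -> 0 < pi k)
  (Hsum : rsum K pi = 1)
  (Hdist : forall k1 k2, (k1 < K)%nat -> (k2 < K)%nat -> k1 <> k2 -> mu k1 <> mu k2) :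
  (forall e1 e2, 0 <= e1 -> e1 <= e2 -> e2 <= 1 - rmax K pi ->
     fval K pi mu e2 <= fval K pi mu e1) /\
  fval K pi mu 0 = rsum K (fun k => pi k * mu k ^ 2) /\
  (forall e, 0 < e -> e <= 1 - rmax K pi -> fval K pi mu e < fval K pi mu 0).
Proof.
  destruct (min_gap_pos K mu Hdist) as (d & Hd & Hgap).
  assert (HK0 : (0 < K)%nat) by lia.
  assert (Hd0 : 0 <= d) by lra.
  split; [|split].
  - intros e1 e2 _; apply (fval_antitone K pi mu d); assumption.
  - apply (fval_0 K pi mu d); assumption.
  - intros e He Hemax.
    rewrite (fval_0 K pi mu d) by assumption.
    assert (fval K pi mu e <= rsum K (fun k => pi k * mu k ^ 2) - d ^ 2 / 4 * e)
      by (apply (fval_le K pi mu d); assumption).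
    assert (0 < d ^ 2 / 4 * e) by (apply Rmult_lt_0_compat; [pose proof (pow_lt d 2 Hd)|]; lra).
    lra.
Qed.
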